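(* Let $(P_1,\dots,P_J)$ be a stochastic demand system with vector representation $\pi\in\mathbf{R}^{\sum_j I_j}$, and let $A$ be the rational demand matrix, with $H$ columns. Then $(P_1,\dots,P_J)$ is stochastically rationalizable if and only if $\pi=A\nu$ for some $\nu$ in the unit simplex $\Delta^{H-1}=\{\nu\in\mathbf{R}^H:\nu\ge 0,\ \mathbf{1}_H'\nu=1\}$. Furthermore, this holds if and only if $\pi=A\nu$ for some $\nu\in\mathbf{R}^H$ with $\nu\ge 0$.
   Context: Fix integers $K\ge 1$ and $J\ge1$, price vectors $p_1,\dots,p_J\in\mathbf{R}^K_{++}$, and budget planes $\mathcal{B}_j=\{y\in\mathbf{R}^K_+:p_j'y=1\}$. A point $x$ is on, strictly above, or strictly below $\mathcal{B}_j$ according as $p_j'x=1$, $>1$, $<1$. A demand vector $d=(d_1,\dots,d_J)\in\mathcal{B}_1\times\cdots\times\mathcal{B}_J$ is rationalizable if there is a strictly increasing $u:\mathbf{R}^K_+\to\mathbf{R}$ with $d_j\in\arg\max_{x\in\mathcal{B}_j}u(x)$ for all $j$. A stochastic demand system is $(P_1,\dots,P_J)$ with $P_j$ a probability distribution on $\mathcal{B}_j$; it is stochastically rationalizable if some probability distribution on $\mathcal{B}_1\times\cdots\times\mathcal{B}_J$ concentrated on rationalizable demand vectors has $j$-th marginal $P_j$ for all $j$. Patches: the coarsest partition of $\bigcup_j\mathcal{B}_j$ such that each $\mathcal{B}_j$ is a union of cells and each cell is, for every $j$, entirely on, entirely strictly above, or entirely strictly below $\mathcal{B}_j$ (equivalently,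 cells are the nonempty sets of points with a common sign vector $(\mathrm{sign}(p_j'x-1))_j$). For each patch $x$ fix a representative $y^*(x)\in x$. For each $j$ list the patches contained in $\mathcal{B}_j$ (in an arbitrary fixed order) as $x_{1|j},\dots,x_{I_j|j}$; a patch lying on several budget planes appears in several lists. The vector representation of $(P_1,\dots,P_J)$ is the vector $\pi$ of length $\sum_j I_j$ consisting of $J$ consecutive blocks, the $j$-th block being $(P_j(x_{1|j}),\dots,P_j(x_{I_j|j}))$. The rational demand matrix $A$ is the matrix whose columns are exactly (each once, in some order) the binary vectors $a$ of length $\sum_j I_j$ that have exactly one entry equal to $1$ in each block, say at position $i_j$ in block $j$, and for which the demand vector $(y^*(x_{i_1|1}),\dots,y^*(x_{i_J|J}))$ is rationalizable; $H$ denotes its number of columns. *)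

From HB Require Import structures.
From mathcomp Require Import all_boot all_order all_algebra.
From mathcomp Require Import all_classical all_reals all_analysis.

Set Implicit Arguments.
Unset Strict Implicit.
Unset Printing Implicit Defensive.

Import Order.TTheory GRing.Theory Num.Theory.
Local Open Scope classical_set_scope.
Local Open Scope ring_scope.

(* Points of R^K are K-tuples of reals; R^K carries the product (Borel)
   sigma-algebra generated by the coordinate projections (library instance
   on n.-tuple T). *)

Section RevealedStochasticPreference.
Variables (R : realType) (K J : nat) (p : 'I_J -> K.-tuple R).

Definition point := K.-tuple R.
Definition demand := J.-tuple (K.-tuple R).

Definition dot (q x : point) : R := \sum_(k < K) tnth q k * tnth x k.

Definition nonneg (x : point) : Prop := forall k, 0 <= tnth x k.

Definition budget (j : 'I_J) : set point :=
  [set x | nonneg x /\ dot (p j) x = 1].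

Definition side (j : 'I_J) (x : point) : option bool :=
  if dot (p j) x == 1 then None else Some (1 < dot (p j) x).

(* sign vectors (sign(p_j'x - 1))_j *)
Definition signvec := {ffun 'I_J -> option bool}.

Definition cell (s : signvec) : set point :=
  [set x | nonneg x /\ forall j, side j x = s j].

(* s indexes a patch: its cell is nonempty and lies in the union of the
   budget planes *)
Definition is_patch (s : signvec) : Prop :=
  (exists j, s j = None) /\ cell s !=set0.

Definition patch_onb (j : 'I_J) (s : signvec) : bool :=
  (s j == None) && `[< cell s !=set0 >].

Definition strictly_increasing (u : point -> R) : Prop :=
  forall x y : point, nonneg x -> nonneg y ->
    (forall k, tnth x k <= tnth y k) -> x != y -> u x < u y.

Definition rationalizable (d : demand) : Prop :=
  exists u : point -> R, strictly_increasing u /\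
    forall j : 'I_J, budget j (tnth d j) /\
      (forall x, budget j x -> u x <= u (tnth d j)).

Definition stoch_demand_system (P : 'I_J -> probability point R) : Prop :=
  forall j, P j (budget j) = 1%E.

Definition stoch_rationalizable (P : 'I_J -> probability point R) : Prop :=
  exists Q : probability demand R,
    (forall (j : 'I_J) (B : set point), measurable B ->
       Q ((fun d : demand => tnth d j) @^-1` B) = P j B) /\
    exists S : set demand, [/\ measurable S, S `<=` rationalizable &
                              Q S = 1%E].

(* Enumerated (via enum_val) in the order of the product 'I_J * signvec,
   which is j-major, so the rows form J consecutive blocks, the j-th block
   listing the patches x_{1|j},...,x_{I_j|j} contained in B_j. *)
Definition rowT := {js : 'I_J * signvec | patch_onb js.1 js.2}.

Definition nrows := #|{: rowT}|.

Definition vecrep (P : 'I_J -> probability point R) : 'cV[R]_nrows :=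
  \col_(i < nrows) let r := val (@enum_val rowT predT i) in
                   fine (P r.1 (cell r.2)).

(* Selections of one patch in each B_j (= binary vectors with exactly one 1
   per block), for which the demand vector of representatives
   (y*(x_{i_1|1}),...,y*(x_{i_J|J})) is rationalizable; y is the fixed
   choice of representatives y*. *)
Definition colT (y : signvec -> point) :=
  {sel : {ffun 'I_J -> signvec} |
     [forall j, patch_onb j (sel j)] &&
     `[< rationalizable [tuple y (sel j) | j < J] >]}.

Definition ncols (y : signvec -> point) := #|{: colT y}|.

Definition ratdemand (y : signvec -> point) : 'M[R]_(nrows, ncols y) :=
  \matrix_(i < nrows, h < ncols y)
    let r := val (@enum_val rowT predT i) in
    let c := val (@enum_val (colT y) predT h) in
    if c r.1 == r.2 then 1 else 0.

End RevealedStochasticPreference.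

From HB Require Import structures.
From mathcomp Require Import all_boot all_order all_algebra.
From mathcomp Require Import all_classical all_reals all_analysis.
From mathcomp Require Import giry.
From mathcomp.algebra_tactics Require Import ring lra.

Set Implicit Arguments.
Unset Strict Implicit.
Unset Printing Implicit Defensive.

Import Order.TTheory GRing.Theory Num.Theory.
Local Open Scope classical_set_scope.
Local Open Scope ring_scope.

(* Rationalizability of a demand vector only depends on the patches containing
   its components.  Indeed (a discrete form of Afriat's theorem) d is
   rationalizable iff the observations admit a ranking r with r_i <= r_j
   whenever p_j'd_i <= 1 and r_i < r_j whenever p_j'd_i < 1: a rationalizing
   utility ranks them this way, and conversely x |-> max {r_i + 1 | d_i <= x},
   plus a bounded tie-breaking term, rationalizes d.  The ranking condition only
   sees on which side of each budget plane the d_i lie.  Hence the rationalizable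
   demand vectors form the disjoint union of the boxes x_j (patch c_j) over the
   columns c of A.
   A stochastic rationalization Q then gives nu_c = Q (box c), with pi = A nu
   and sum nu = 1.  Conversely, if nu >= 0 and pi = A nu, the mixture
   sum_c nu_c (x)_j P_j (. | patch c_j) lives on the boxes and has marginals
   P_j; in particular it is a probability, so that sum nu = 1 comes for free. *)

Section Rank.
Context {disp : Order.disp_t} {T : porderType disp} {I : finType}.
Variable v : I -> T.

Definition rank (i : I) : nat := #|[set k | (v k < v i)%O]%SET|.

Lemma rank_le i j : (v i <= v j)%O -> (rank i <= rank j)%N.
Proof.
move=> le_ij; apply: subset_leq_card; apply/fintype.subsetP => k.
by rewrite !inE => /lt_le_trans; apply.
Qed.

Lemma rank_lt i j : (v i < v j)%O -> (rank i < rank j)%N.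
Proof.
move=> lt_ij; apply: proper_card; apply/properP; split.
  by apply/fintype.subsetP => k; rewrite !inE => /lt_trans; apply.
by exists i; rewrite !inE ?ltxx.
Qed.

End Rank.

Lemma sum_enum_rank (R : nmodType) (T : finType) (G : 'I_#|T| -> R) :
  \sum_(i < #|T|) G i = \sum_(t : T) G (enum_rank t).
Proof. by rewrite (reindex enum_rank) //; apply: onW_bij; apply: enum_rank_bij. Qed.

Section Rationalizability.
Variables (R : realType) (K J : nat).
Implicit Types (c x z : K.-tuple R).

Definition coord_le x z : bool := [forall k, tnth x k <= tnth z k].

Lemma coord_le_refl x : coord_le x x.
Proof. by apply/forallP => k. Qed.

Lemma coord_le_trans z x w : coord_le x z -> coord_le z w -> coord_le x w.
Proof.
move=> /forallP xz /forallP zw; apply/forallP => k; exact: le_trans (xz k) (zw k).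
Qed.

Lemma tuple_neq_coord x z : x != z -> exists k, tnth x k != tnth z k.
Proof.
move=> ne; apply/existsP; apply: contraNT ne; rewrite negb_exists => /forallP h.
by apply/eqP/eq_from_tnth => k; apply/eqP/negbNE/h.
Qed.

Lemma dot_ge0 c x : (forall k, 0 <= tnth c k) -> nonneg x -> 0 <= dot c x.
Proof. by move=> c0 x0; apply: sumr_ge0 => k _; rewrite mulr_ge0. Qed.

Section PositiveCoefficients.
Variable c : K.-tuple R.
Hypothesis c_gt0 : forall k, 0 < tnth c k.

Lemma dot_le x z : coord_le x z -> dot c x <= dot c z.
Proof. by move=> /forallP le; apply: ler_sum => k _; rewrite ler_pM2l. Qed.

Lemma dot_lt x z : coord_le x z -> x != z -> dot c x < dot c z.
Proof.
move=> /forallP le /tuple_neq_coord[k0 ne].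
rewrite /dot (bigD1 k0) //= [X in _ < X](bigD1 k0) //=.
apply: ltr_leD; first by rewrite ltr_pM2l // lt_neqAle ne le.
by apply: ler_sum => k _; rewrite ler_pM2l.
Qed.

End PositiveCoefficients.

Variable p : 'I_J -> K.-tuple R.
Implicit Types (d : demand R K J) (u : K.-tuple R -> R).

Lemma dot_le1_side j x : (dot (p j) x <= 1) = (side p j x != Some true).
Proof.
rewrite /side; have [->|_] := eqVneq (dot (p j) x) 1; first by rewrite lexx.
by rewrite leNgt; case: (1 < _).
Qed.

Lemma dot_lt1_side j x : (dot (p j) x < 1) = (side p j x == Some false).
Proof.
rewrite /side; have [->|ne] := eqVneq (dot (p j) x) 1; first by rewrite ltxx.
by rewrite lt_neqAle ne leNgt; case: (1 < _).
Qed.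

Lemma dot_eq1_side j x : (dot (p j) x == 1) = (side p j x == None).
Proof. by rewrite /side; case: eqVneq. Qed.

Definition rationalizes u d :=
  forall j, budget p j (tnth d j) /\ (forall x, budget p j x -> u x <= u (tnth d j)).

Definition consistent_ranking d (r : 'I_J -> nat) :=
  forall i j, (dot (p j) (tnth d i) <= 1 -> (r i <= r j)%N) /\
              (dot (p j) (tnth d i) < 1 -> (r i < r j)%N).

Hypotheses (p_gt0 : forall j k, 0 < tnth (p j) k) (K_gt0 : (0 < K)%N).

Lemma exists_budget_above j x : nonneg x -> dot (p j) x < 1 ->
  exists2 z, budget p j z & coord_le x z && (x != z).
Proof.
move=> x0 lt1; pose k0 := Ordinal K_gt0.
pose t := (1 - dot (p j) x) / tnth (p j) k0.
have t_gt0 : 0 < t by rewrite divr_gt0 ?subr_gt0.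
pose z := [tuple tnth x k + (if k == k0 then t else 0) | k < K].
have zE k : tnth z k = tnth x k + (if k == k0 then t else 0) by rewrite tnth_mktuple.
have x_le_z : coord_le x z.
  by apply/forallP => k; rewrite zE lerDl; case: ifP => // _; apply: ltW.
exists z; last first.
  rewrite x_le_z /=; apply/eqP => /(congr1 (fun w => tnth w k0)).
  by rewrite zE eqxx; lra.
split; first by move=> k; apply: le_trans (x0 k) _; apply: (forallP x_le_z).
rewrite /dot; under eq_bigr => k _ do rewrite zE mulrDr.
rewrite big_split /= [X in _ + X](bigD1 k0) //= [X in _ + (_ + X)]big1 ?addr0.
  by rewrite -/(dot (p j) x) mulrCA divff ?mulr1 ?subrKC // gt_eqF.
by move=> k /negbTE ->; rewrite mulr0.
Qed.

Lemma rationalizes_revealed u d : strictly_increasing u ->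
  rationalizes u d -> forall i j,
  (dot (p j) (tnth d i) <= 1 -> u (tnth d i) <= u (tnth d j)) /\
  (dot (p j) (tnth d i) < 1 -> u (tnth d i) < u (tnth d j)).
Proof.
move=> u_incr ud i j; have [[di0 _] _] := ud i.
have revealed_lt : dot (p j) (tnth d i) < 1 -> u (tnth d i) < u (tnth d j).
  move=> lt1; have [z bz /andP[le_iz ne_iz]] := exists_budget_above di0 lt1.
  apply: lt_le_trans (proj2 (ud j) z bz).
  by apply: u_incr => //; [case: bz | apply/forallP].
split=> // le1; have [eq1|ne1] := eqVneq (dot (p j) (tnth d i)) 1.
  exact: (proj2 (ud j)).
by apply/ltW/revealed_lt; rewrite lt_neqAle ne1.
Qed.

Lemma rationalizable_ranking d : rationalizable p d ->
  exists r, consistent_ranking d r.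
Proof.
move=> [u [u_incr ud]]; pose v i := u (tnth d i); exists (rank v) => i j.
have [le_ij lt_ij] := rationalizes_revealed u_incr ud i j.
by split=> [/le_ij|/lt_ij]; [exact: (@rank_le _ _ _ v) | exact: (@rank_lt _ _ _ v)].
Qed.

Section RankingUtility.
Variables (d : demand R K J) (r : 'I_J -> nat).
Hypotheses (d_budget : forall j, budget p j (tnth d j))
           (r_consistent : consistent_ranking d r).

Let level x := \max_(i | coord_le (tnth d i) x) (r i).+1.

Let level_ge i x : coord_le (tnth d i) x -> ((r i).+1 <= level x)%N.
Proof. exact: leq_bigmax_cond. Qed.

Let level_witness x : (0 < level x)%N ->
  exists2 i, coord_le (tnth d i) x & level x = (r i).+1.
Proof.
rewrite /level; case: (pickP (fun i => coord_le (tnth d i) x)) => [i0 di0 _|none].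
  by rewrite (bigop.bigmax_eq_arg i0) //; case: arg_maxnP => // i; exists i.
by rewrite big_pred0.
Qed.

Let level_mono x z : coord_le x z -> (level x <= level z)%N.
Proof.
move=> le_xz; apply/bigmax_leqP => i le_ix.
exact/level_ge/(coord_le_trans le_ix).
Qed.

Let level_le_budget j x : dot (p j) x <= 1 -> (level x <= (r j).+1)%N.
Proof.
move=> le1; apply/bigmax_leqP => i le_ix; rewrite ltnS.
by apply: (proj1 (r_consistent i j)); apply: le_trans le1; apply: dot_le.
Qed.

Let level_demand j : level (tnth d j) = (r j).+1.
Proof.
apply/eqP; rewrite eqn_leq level_ge ?coord_le_refl // andbT.
by apply: level_le_budget; have [_ ->] := d_budget j.
Qed.

Let level_lt_budget j x : dot (p j) x <= 1 -> x \notin d -> (level x <= r j)%N.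
Proof.
move=> le1 xNd; have [->//|/level_witness[i le_ix ->]] := posnP (level x).
apply: (proj2 (r_consistent i j)).
apply: lt_le_trans le1; apply: dot_lt => //.
by apply: contraNneq xNd => <-; apply: mem_tnth.
Qed.

Let level_lt_demand i x : coord_le x (tnth d i) -> x != tnth d i ->
  (level x < level (tnth d i))%N.
Proof.
move=> le_xi ne_xi; have [_ eq1] := d_budget i.
have lt1 : dot (p i) x < 1 by rewrite -eq1; apply: dot_lt.
rewrite level_demand ltnS; have [/tnthP[k xk]|xNd] := boolP (x \in d).
  by rewrite xk level_demand; apply: (proj2 (r_consistent k i)); rewrite -xk.
exact: level_lt_budget (ltW lt1) xNd.
Qed.

Let ones := [tuple of nseq K (1 : R)].

Let ones_gt0 k : 0 < tnth ones k.
Proof. by rewrite tnth_nseq. Qed.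

(* Breaks the ties between bundles of equal level, without disturbing the
   demanded bundles. *)
Let bump x := if x \in d then 0 else dot ones x / (1 + dot ones x).

Let bump_ge0 x : nonneg x -> 0 <= bump x.
Proof.
move=> x0; have s0 := dot_ge0 (fun k => ltW (ones_gt0 k)) x0.
by rewrite /bump; case: ifP => // _; rewrite divr_ge0 // addr_ge0.
Qed.

Let bump_lt1 x : nonneg x -> bump x < 1.
Proof.
move=> x0; have s0 := dot_ge0 (fun k => ltW (ones_gt0 k)) x0.
by rewrite /bump; case: ifP => // _; rewrite ltr_pdivrMr ?mul1r ?ltrDr ?ltr01 ?ltr_wpDr.
Qed.

Let bump_lt x z : nonneg x -> coord_le x z -> x != z -> z \notin d ->
  bump x < bump z.
Proof.
move=> x0 le_xz ne_xz zNd; rewrite /bump (negbTE zNd).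
have a0 := dot_ge0 (fun k => ltW (ones_gt0 k)) x0.
have lt_ab := dot_lt ones_gt0 le_xz ne_xz.
move: (dot ones x) (dot ones z) a0 lt_ab => a b a0 lt_ab.
have a1 : 0 < 1 + a by rewrite ltr_wpDr.
have b1 : 0 < 1 + b by rewrite ltr_wpDr // ltW // (le_lt_trans a0 lt_ab).
have : a / (1 + a) < b / (1 + b).
  rewrite ltr_pdivrMr // mulrAC ltr_pdivlMr //.
  by rewrite !mulrDr !mulr1 [a * b]mulrC ltrD2r.
by case: ifP => // _; apply: le_lt_trans; rewrite divr_ge0 // ltW.
Qed.

Let level_sep (m n : nat) (a b : R) : 0 <= b -> a < 1 -> (m < n)%N ->
  m%:R + a < n%:R + b.
Proof.
move=> b0 a1 lt_mn; have : m.+1%:R <= n%:R :> R by rewrite ler_nat.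
rewrite -natr1; lra.
Qed.

Lemma ranking_rationalizable : rationalizable p d.
Proof.
exists (fun x => (level x)%:R + bump x); split.
  move=> x z x0 z0 le_xz ne_xz; have le_xz' : coord_le x z by apply/forallP.
  have := level_mono le_xz'; rewrite leq_eqVlt => /orP[/eqP eq_lv|]; last first.
    by apply: level_sep; [apply: bump_ge0 | apply: bump_lt1].
  rewrite eq_lv ltrD2l; apply: bump_lt => //; apply/tnthP => -[i zi].
  by have := @level_lt_demand i x; rewrite -zi eq_lv ltnn => /(_ le_xz' ne_xz).
move=> j; split=> // x [x0 eq1].
have bump_dj : bump (tnth d j) = 0 by rewrite /bump mem_tnth.
rewrite level_demand bump_dj; have [/tnthP[i xi]|xNd] := boolP (x \in d).
  rewrite xi /bump mem_tnth level_demand lerD2r ler_nat ltnS.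
  by apply: (proj1 (r_consistent i j)); rewrite -xi eq1.
apply/ltW/level_sep => //; first exact: bump_lt1.
by rewrite ltnS; apply: level_lt_budget; rewrite ?eq1.
Qed.

End RankingUtility.

Definition signvec_of x : signvec J := [ffun j => side p j x].

Lemma cell_signvec_of s x : cell p s x -> s = signvec_of x.
Proof. by move=> [_ sx]; apply/ffunP => j; rewrite ffunE sx. Qed.

Lemma rationalizable_same_cells d d' : rationalizable p d ->
  (forall i, cell p (signvec_of (tnth d i)) (tnth d' i)) -> rationalizable p d'.
Proof.
move=> rd d'_cell; have [r r_consistent] := rationalizable_ranking rd.
have side_d' i j : side p j (tnth d' i) = side p j (tnth d i).
  by have [_ ->] := d'_cell i; rewrite ffunE.
apply: (@ranking_rationalizable _ r) => [j|i j].
  have [d'0 _] := d'_cell j; split=> //; apply/eqP.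
  rewrite dot_eq1_side side_d' -dot_eq1_side.
  by case: rd => u [_ /(_ j) [[_ /eqP]]].
rewrite dot_le1_side dot_lt1_side !side_d' -dot_le1_side -dot_lt1_side.
exact: r_consistent.
Qed.

End Rationalizability.

Section ProbabilityFacts.
Local Open Scope ereal_scope.
Context {d} {T : measurableType d} {R : realType}.

Lemma measure_bigcup_finType (mu : {measure set T -> \bar R}) (I : finType)
    (P : {pred I}) (F : I -> set T) :
  (forall i, measurable (F i)) -> trivIset setT F ->
  mu (\bigcup_(i in [set` P]) F i) = \sum_(i | P i) mu (F i).
Proof.
move=> mF tF; rewrite measure_fin_bigcup //; last exact: sub_trivIset tF.
rewrite -(@bigfs _ _ _ _ (index_enum I)) ?index_enum_uniq //.
by move=> i _; rewrite mem_index_enum.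
Qed.

Lemma probability_setI1 (P : probability T R) (S X : set T) :
  measurable S -> measurable X -> P S = 1 -> P X = P (X `&` S).
Proof.
move=> mS mX PS1; have PSC0 : P (~` S) = 0 by rewrite probability_setC // PS1 subee.
rewrite (measureDI P mX mS) (@subset_measure0 _ _ _ P (X `\` S) (~` S)) ?add0e //.
  exact: measurableD.
exact: measurableC.
Qed.

Lemma probability_partition (P : probability T R) (I : finType) (Q : {pred I})
    (F : I -> set T) (X : set T) :
  (forall i, measurable (F i)) -> trivIset setT F ->
  P (\bigcup_(i in [set` Q]) F i) = 1 -> measurable X ->
  P X = \sum_(i | Q i) P (X `&` F i).
Proof.
move=> mF tF PF1 mX; rewrite (probability_setI1 _ mX PF1); last first.
  by apply: fin_bigcup_measurable.
rewrite setI_bigcupr measure_bigcup_finType // => [i|].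
  exact: measurableI.
move/trivIsetP: tF => tF; apply/trivIsetP => i j _ _ /(tF i j Logic.I Logic.I).
by rewrite setIACA => ->; rewrite setI0.
Qed.

Lemma mnormalizeE (mu : {measure set T -> \bar R}) (P0 : probability T R) A :
  mu setT = 1 -> mnormalize mu P0 A = mu A.
Proof. by move=> mu1; rewrite /mnormalize mu1 /= onee_eq0 /= invr1 mule1. Qed.

End ProbabilityFacts.

Section FiniteProduct.
Local Open Scope ereal_scope.
Context {d} {T : measurableType d} {R : realType}.

Definition box n (A : 'I_n -> set T) : set (n.-tuple T) :=
  [set t | forall i, A i (tnth t i)].

Lemma measurable_tnth_preimage n (i : 'I_n) (A : set T) : measurable A ->
  measurable ((fun t : n.-tuple T => tnth t i) @^-1` A).
Proof. by move=> mA; rewrite -[X in measurable X]setTI; apply: measurable_tnth. Qed.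

Lemma measurable_box n (A : 'I_n -> set T) : (forall i, measurable (A i)) ->
  measurable (box A).
Proof.
move=> mA; rewrite (_ : box A = \bigcap_(i in setT) ((fun t => tnth t i) @^-1` A i)).
  by apply: fin_bigcap_measurable => // i _; apply: measurable_tnth_preimage.
by apply/seteqP; split=> t At i //=; apply: (At i).
Qed.

Let measurable_cons_pair n : measurable_fun [set: T * n.-tuple T]
  (fun xt : T * n.-tuple T => [the n.+1.-tuple T of xt.1 :: xt.2]).
Proof. exact: measurable_cons. Qed.

Fixpoint prodm n : ('I_n -> subprobability T R) -> subprobability (n.-tuple T) R :=
  match n with
  | 0 => fun _ => giry_ret [tuple]
  | n'.+1 => fun mu => giry_map (@measurable_cons_pair n')
      (product_subprobability (mu ord0, prodm (fun i => mu (lift ord0 i))))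
  end.

Lemma prodm_box n (mu : 'I_n -> subprobability T R) (A : 'I_n -> set T) :
  (forall i, measurable (A i)) -> prodm mu (box A) = \prod_(i < n) mu i (A i).
Proof.
elim: n mu A => [|n IH] mu A mA.
  by rewrite big_ord0 /= /giry_ret diracE (_ : [tuple] \in box A) // inE => -[].
rewrite big_ord_recl /= -IH // /pushforward.
rewrite (_ : _ @^-1` box A = A ord0 `*` box (fun i => A (lift ord0 i))).
  by rewrite product_measure1E //; apply: measurable_box.
apply/seteqP; split=> [[x t] /= At|[x t] [/= Ax At] i].
  by split=> [|i]; [apply: (At ord0) | have := At (lift ord0 i); rewrite tnthS].
by case: (unliftP ord0 i) => [j ->|->]; rewrite ?tnthS ?tnth0.
Qed.

End FiniteProduct.

Section Mixture.
Local Open Scope ereal_scope.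
Context {d} {T : measurableType d} {R : realType} {I : finType}.
Variables (w : I -> R) (mu : {measure set T -> \bar R}) (E : I -> set T).

(* The hypotheses are arguments of [mixture], although its value does not
   depend on them, so that the measure instance below is found by inference. *)
Definition mixture (w_ge0 : forall i, (0 <= w i)%R)
    (mE : forall i, measurable (E i)) (A : set T) : \bar R :=
  \sum_(i : I) (w i)%:E * mu (A `&` E i).

Variables (w_ge0 : forall i, (0 <= w i)%R) (mE : forall i, measurable (E i)).

Let mixture0 : mixture w_ge0 mE set0 = 0.
Proof. by rewrite /mixture big1 // => i _; rewrite set0I measure0 mule0. Qed.

Let mixture_ge0 A : 0 <= mixture w_ge0 mE A.
Proof. by apply: sume_ge0 => i _; rewrite mule_ge0 ?lee_fin. Qed.

Let mixture_sigma_additive : semi_sigma_additive (mixture w_ge0 mE).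
Proof.
move=> F mF tF mUF; rewrite [X in _ --> X](_ : _ =
    lim ((fun n => \sum_(0 <= i < n) mixture w_ge0 mE (F i)) @ \oo)).
  by apply: is_cvg_ereal_nneg_natsum => k _.
rewrite /mixture nneseries_sum; last by move=> i j _; rewrite mule_ge0 ?lee_fin.
apply: eq_bigr => i _; rewrite nneseriesZl //; congr (_ * _).
rewrite setI_bigcupl measure_semi_bigcup //.
- by move=> k; apply: measurableI.
- move/trivIsetP: tF => tF; apply/trivIsetP => a b _ _ ab.
  by rewrite setIACA setIid tF ?set0I.
- by rewrite -setI_bigcupl; apply: measurableI.
Qed.

HB.instance Definition _ := isMeasure.Build _ _ _ (mixture w_ge0 mE)
  mixture0 mixture_ge0 mixture_sigma_additive.

End Mixture.

Section Patches.
Variables (R : realType) (K J : nat) (p : 'I_J -> K.-tuple R).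

Lemma measurable_dot (c : K.-tuple R) : measurable_fun setT (dot c).
Proof.
apply: measurable_sum => k; apply: measurable_realfun.measurable_funM => //.
exact: measurable_tnth.
Qed.

Lemma measurable_side j v : measurable [set x | side p j x = v].
Proof.
rewrite (_ : [set x | _] =
  dot (p j) @^-1` [set r | (if r == 1 then None else Some (1 < r)) = v]) //.
rewrite -[X in measurable X]setTI; apply: measurable_dot => //.
case: v => [[]|].
- rewrite (_ : [set _ | _] = `]1, +oo[%classic); first exact: measurable_itv.
  apply/seteqP; split=> r /=; rewrite in_itv /= andbT.
    by case: eqVneq => // _ [].
  by move=> lt1r; rewrite gt_eqF // lt1r.
- rewrite (_ : [set _ | _] = `]-oo, 1[%classic); first exact: measurable_itv.
  apply/seteqP; split=> r /=; rewrite in_itv /=.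
    by case: eqVneq => // ne [] /negbT; rewrite -leNgt lt_neqAle ne => ->.
  by move=> ltr1; rewrite lt_eqF // ltNge ltW.
- rewrite (_ : [set _ | _] = [set 1]); first exact: measurable_set1.
  by apply/seteqP; split=> r /=; [case: eqVneq | move=> ->; rewrite eqxx].
Qed.

Lemma measurable_cell s : measurable (cell p s).
Proof.
rewrite (_ : cell p s = box (fun _ : 'I_K => `[0, +oo[%classic : set R) `&`
                        \bigcap_(j in setT) [set x | side p j x = s j]).
  apply: measurableI; first by apply: measurable_box => k; apply: measurable_itv.
  by apply: fin_bigcap_measurable => // j _; apply: measurable_side.
apply/seteqP; split=> x [x0 sx]; split.
- by move=> k; rewrite /= in_itv /= andbT.
- by move=> j _; apply: sx.
- by move=> k; have := x0 k; rewrite /= in_itv /= andbT.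
- by move=> j; apply: (sx j).
Qed.

Lemma trivIset_cell : trivIset setT (cell p).
Proof.
apply/trivIsetP => s s' _ _; apply: contraNeq => /set0P[x [/cell_signvec_of -> ]].
by move=> /cell_signvec_of ->.
Qed.

Lemma budget_bigcup_cell j :
  budget p j = \bigcup_(s in [set` patch_onb p j]) cell p s.
Proof.
apply/seteqP; split=> [x [x0 /eqP eq1]|x [s /andP[/eqP sj _] [x0 sx]]].
  have x_cell : cell p (signvec_of p x) x by split=> // i; rewrite ffunE.
  exists (signvec_of p x) => //; change (patch_onb p j (signvec_of p x)).
  rewrite /patch_onb ffunE -dot_eq1_side eq1.
  by apply/asboolP; exists x.
by split=> //; apply/eqP; rewrite dot_eq1_side sx sj.
Qed.

End Patches.

Section StochasticRationalizability.
Variables (R : realType) (K J : nat) (p : 'I_J -> K.-tuple R).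
Hypotheses (K_gt0 : (0 < K)%N) (p_gt0 : forall j k, 0 < tnth (p j) k).
Variable y : signvec J -> K.-tuple R.
Hypothesis y_cell : forall s, is_patch p s -> cell p s (y s).

Local Notation column := (colT p y).

Lemma column_patch (c : column) j : patch_onb p j (val c j).
Proof. by have /andP[/forallP] := valP c. Qed.

Definition colbox (c : column) : set (demand R K J) :=
  box (fun j => cell p (val c j)).

Lemma measurable_colbox c : measurable (colbox c).
Proof. by apply: measurable_box => j; apply: measurable_cell. Qed.

Lemma trivIset_colbox : trivIset setT colbox.
Proof.
apply/trivIsetP => c c' _ _; apply: contraNeq => /set0P[d [dc dc']].
apply/eqP/val_inj/ffunP => j.
by rewrite (cell_signvec_of (dc j)) (cell_signvec_of (dc' j)).
Qed.

Lemma cell_representative j s : patch_onb p j s -> cell p s (y s).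
Proof. by move=> /andP[/eqP sj /asboolP s_ne0]; apply: y_cell; split=> //; exists j. Qed.

Lemma rationalizable_colbox :
  rationalizable p = \bigcup_(c in [set` predT]) colbox c.
Proof.
apply/seteqP; split=> [d rd|d [c _ dc]]; last first.
  apply: (rationalizable_same_cells p_gt0 K_gt0 (d := [tuple y (val c j) | j < J])).
    by have /andP[_ /asboolP] := valP c.
  move=> i; rewrite tnth_mktuple.
  by rewrite -(cell_signvec_of (cell_representative (column_patch c i))).
pose sel := [ffun j => signvec_of p (tnth d j)].
have d_cell j : cell p (sel j) (tnth d j).
  by case: rd => u [_ /(_ j) [[d0 _] _]]; split=> // i; rewrite !ffunE.
have sel_patch j : patch_onb p j (sel j).
  apply/andP; split; last by apply/asboolP; exists (tnth d j).
  rewrite !ffunE -dot_eq1_side; case: rd => u [_ /(_ j) [[_ ->] _]].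
  by rewrite eqxx.
have sel_column : [forall j, patch_onb p j (sel j)] &&
                  `[< rationalizable p [tuple y (sel j) | j < J] >].
  rewrite (introT forallP sel_patch); apply/asboolP.
  apply: (rationalizable_same_cells p_gt0 K_gt0 rd) => i.
  by have := cell_representative (sel_patch i); rewrite tnth_mktuple !ffunE.
by exists (exist _ sel sel_column).
Qed.

Lemma measurable_rationalizable : measurable (rationalizable p).
Proof.
rewrite rationalizable_colbox; apply: fin_bigcup_measurable => // c _.
exact: measurable_colbox.
Qed.

Lemma probability_colbox_partition (Q : probability (demand R K J) R) X :
  Q (rationalizable p) = 1%E -> measurable X ->
  Q X = (\sum_(c : column) Q (X `&` colbox c))%E.
Proof.
move=> Qrat mX; apply: probability_partition => //.
- exact: measurable_colbox.
- exact: trivIset_colbox.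
- by rewrite -rationalizable_colbox.
Qed.

Lemma ratdemand_mulmx_entry (nu : 'cV[R]_(ncols p y)) (r : rowT p) :
  (ratdemand p y *m nu) (enum_rank r) 0 =
  \sum_(c : column | val c (val r).1 == (val r).2) nu (enum_rank c) 0.
Proof.
rewrite !mxE sum_enum_rank [RHS]big_mkcond /=; apply: eq_bigr => c _.
by rewrite !mxE !enum_rankK /=; case: ifP; rewrite ?mul1r ?mul0r.
Qed.

Lemma vecrep_ratdemandP (P : 'I_J -> probability (K.-tuple R) R)
    (nu : 'cV[R]_(ncols p y)) :
  vecrep p P = ratdemand p y *m nu <->
  forall j s, patch_onb p j s ->
    fine (P j (cell p s)) = \sum_(c : column | val c j == s) nu (enum_rank c) 0.
Proof.
split=> [P_nu j s js|entries].
  pose r : rowT p := exist _ (j, s) js.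
  have := congr1 (fun M : 'cV[R]_(nrows p) => M (enum_rank r) 0) P_nu.
  by rewrite mxE enum_rankK ratdemand_mulmx_entry.
apply/matrixP => i k; rewrite (ord1 k) -[i]enum_valK; set r := enum_val i.
by rewrite mxE enum_rankK ratdemand_mulmx_entry; apply: entries; apply: (valP r).
Qed.

Lemma stoch_rationalizable_simplex (P : 'I_J -> probability (K.-tuple R) R) :
  stoch_rationalizable p P ->
  exists nu : 'cV[R]_(ncols p y),
    [/\ forall h, 0 <= nu h 0, \sum_h nu h 0 = 1 &
         vecrep p P = ratdemand p y *m nu].
Proof.
move=> [Q [Q_marg [S [mS S_rat QS1]]]].
have Qrat : Q (rationalizable p) = 1%E.
  have : (Q S <= Q (rationalizable p))%E.
    by apply: le_measure; rewrite ?inE //; apply: measurable_rationalizable.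
  rewrite QS1 => le1Q; apply/le_anti; rewrite le1Q andbT.
  by apply: probability_le1; apply: measurable_rationalizable.
have Q_fin A : measurable A -> Q A \is a fin_num by move=> mA; apply: fin_num_measure.
pose nu : 'cV[R]_(ncols p y) := \col_h fine (Q (colbox (enum_val h))).
have nuE (c : column) : nu (enum_rank c) 0 = fine (Q (colbox c)).
  by rewrite mxE enum_rankK.
exists nu; split.
- by move=> h; rewrite mxE fine_ge0.
- rewrite sum_enum_rank; under eq_bigr do rewrite nuE -[colbox _]setTI.
  rewrite sum_fine => [|c _]; last by rewrite Q_fin // setTI; apply: measurable_colbox.
  by rewrite -probability_colbox_partition // probability_setT.
apply/vecrep_ratdemandP => j s js.
have m_js : measurable ((fun d : demand R K J => tnth d j) @^-1` cell p s).
  by apply: measurable_tnth_preimage; apply: measurable_cell.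
move: (probability_colbox_partition Qrat m_js); rewrite Q_marg; last first.
  exact: measurable_cell.
move=> ->; rewrite -sum_fine.
  rewrite [RHS]big_mkcond; apply: eq_bigr => c _; rewrite nuE.
  have [<-|ne] := eqVneq (val c j) s.
    by rewrite setIidr // => d dc; apply: (dc j).
  rewrite (_ : _ `&` _ = set0) ?measure0 //; apply/seteqP; split=> // d [/= dj dc].
  by move: ne; rewrite (cell_signvec_of dj) (cell_signvec_of (dc j)) eqxx.
by move=> c _; rewrite Q_fin //; apply: measurableI => //; apply: measurable_colbox.
Qed.

Section Sufficiency.
Variable P : 'I_J -> probability (K.-tuple R) R.
Hypothesis P_budget : stoch_demand_system p P.
Variable nu : 'cV[R]_(ncols p y).
Hypotheses (nu_ge0 : forall h, 0 <= nu h 0)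
           (P_nu : vecrep p P = ratdemand p y *m nu).

Let weight (c : column) := nu (enum_rank c) 0.
Let prob j A := fine (P j A).
Let pr j s := prob j (cell p s).

Let P_fin j A : measurable A -> P j A \is a fin_num.
Proof. exact: fin_num_measure. Qed.

Let pr_weight j s : patch_onb p j s ->
  pr j s = \sum_(c : column | val c j == s) weight c.
Proof. exact: (vecrep_ratdemandP P nu).1 P_nu j s. Qed.

Let weight_le (c : column) j : weight c <= pr j (val c j).
Proof.
rewrite (pr_weight (column_patch c j)) (bigD1 c) //= lerDl.
by apply: sumr_ge0 => c' _; apply: nu_ge0.
Qed.

Let weight_eq0 (c : column) j : pr j (val c j) = 0 -> weight c = 0.
Proof. by move=> pr0; apply/le_anti; rewrite -{1}pr0 weight_le nu_ge0. Qed.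

Let cond j B s := prob j (B `&` cell p s) / pr j s.

Let condK j B s : measurable B -> cond j B s * pr j s = prob j (B `&` cell p s).
Proof.
move=> mB; rewrite /cond; have [pr0|pr_neq0] := eqVneq (pr j s) 0; last first.
  by rewrite divfK.
rewrite pr0 mulr0; apply/esym/le_anti; rewrite fine_ge0 ?measure_ge0 // andbT -pr0.
have m_cell := measurable_cell p s.
apply: fine_le; rewrite ?P_fin //; first exact: measurableI.
by apply: le_measure; rewrite ?inE //; apply: measurableI.
Qed.

(* Weighting the product of the conditional laws P_j (. | patch c_j) by
   [weight c] is weighting the restriction of the product measure to [colbox c]
   by [mix_weight c].  If some patch c_j is P_j-negligible then [weight c] = 0,
   so the junk value x / 0 = 0 is harmless. *)
Let mix_weight (c : column) := weight c / \prod_j pr j (val c j).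

Let mix_weight_ge0 (c : column) : 0 <= mix_weight c.
Proof.
by rewrite divr_ge0 ?nu_ge0 // prodr_ge0 // => j _; rewrite fine_ge0 ?measure_ge0.
Qed.

Let mix_weightK (c : column) : mix_weight c * \prod_j pr j (val c j) = weight c.
Proof.
have [/prodf_eq0[j _ /eqP pr0]|nz] := boolP (\prod_j pr j (val c j) == 0).
  by rewrite /mix_weight (weight_eq0 pr0) !mul0r.
by rewrite divfK.
Qed.

Let Pi := prodm (fun j => (P j : subprobability (K.-tuple R) R)).

Let mix := mixture Pi mix_weight_ge0 measurable_colbox.

Let marginal j B : set (demand R K J) := (fun d => tnth d j) @^-1` B.

Let factor j B (c : column) i :=
  if i == j then B `&` cell p (val c i) else cell p (val c i).

Let Pi_marginal_colbox j B c : measurable B ->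
  Pi (marginal j B `&` colbox c) = (\prod_i prob i (factor j B c i))%:E.
Proof.
move=> mB; have m_factor i : measurable (factor j B c i).
  by rewrite /factor; case: eqP => _; [apply: measurableI|]; rewrite //;
    apply: measurable_cell.
rewrite (_ : _ `&` _ = box (factor j B c)).
  rewrite prodm_box // -prodEFin; apply: eq_bigr => i _.
  by rewrite fineK // P_fin.
apply/seteqP; rewrite /factor; split=> [d [/= dB dc] i|d dbox].
  by case: eqP => [->|_]; [split|]; rewrite //; apply: dc.
split; first by have := dbox j; rewrite eqxx => -[].
by move=> i; have := dbox i; case: eqP => [_ []|].
Qed.

Let mix_marginal j B : measurable B -> mix (marginal j B) = P j B.
Proof.
move=> mB; transitivity (\sum_(c : column)
    (mix_weight c * \prod_i prob i (factor j B c i))%:E)%E.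
  by apply: eq_bigr => c _; rewrite [RHS]EFinM -Pi_marginal_colbox.
rewrite sumEFin -[RHS]fineK ?P_fin //; congr (_%:E).
transitivity (\sum_(c : column) cond j B (val c j) * weight c).
  apply: eq_bigr => c _; rewrite (bigD1 j) //= /factor eqxx -(condK _ _ mB).
  rewrite (eq_bigr (fun i => pr i (val c i))) => [|i /negbTE -> //].
  by rewrite -(mix_weightK c) [in X in _ = X](bigD1 j) //=; ring.
rewrite (partition_big (fun c : column => val c j) (patch_onb p j)) /=; last first.
  by move=> c _; apply: column_patch.
transitivity (\sum_(s | patch_onb p j s) prob j (B `&` cell p s)).
  apply: eq_bigr => s js; rewrite (eq_bigr (fun c => cond j B s * weight c)).
    by rewrite -mulr_sumr -pr_weight // condK.
  by move=> c /eqP ->.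
rewrite (probability_partition (Q := patch_onb p j) (measurable_cell p)
  (@trivIset_cell _ _ _ p) _ mB).
  rewrite -sum_fine // => s _; apply: P_fin; apply: measurableI => //.
  exact: measurable_cell.
by rewrite -budget_bigcup_cell P_budget.
Qed.

Hypothesis J_gt0 : (0 < J)%N.

Let mix_setT : mix setT = 1%E.
Proof.
rewrite -(preimage_setT (fun d : demand R K J => tnth d (Ordinal J_gt0))).
by rewrite mix_marginal // probability_setT.
Qed.

Lemma mixture_stoch_rationalizable : stoch_rationalizable p P.
Proof.
pose Q := mnormalize mix (@dirac _ (demand R K J) [tuple p j | j < J] R).
have QE A : Q A = mix A by apply: mnormalizeE mix_setT.
exists Q; split=> [j B mB|]; first exact: eq_trans (QE _) (mix_marginal j mB).
exists (rationalizable p); split=> //; first exact: measurable_rationalizable.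
apply: eq_trans (QE _) _; rewrite -mix_setT; apply: eq_bigr => c _.
by rewrite setTI setIidr // rationalizable_colbox; apply: bigcup_sup.
Qed.

End Sufficiency.
End StochasticRationalizability.

Theorem proposition2 (R : realType) (K J : nat)
  (hK : (0 < K)%N) (hJ : (0 < J)%N)
  (p : 'I_J -> K.-tuple R) (hp : forall j k, 0 < tnth (p j) k)
  (y : signvec J -> K.-tuple R)
  (hy : forall s, is_patch p s -> cell p s (y s))
  (P : 'I_J -> probability (K.-tuple R) R)
  (hP : stoch_demand_system p P) :
  (stoch_rationalizable p P <->
     exists nu : 'cV[R]_(ncols p y),
       [/\ forall h, 0 <= nu h 0, \sum_h nu h 0 = 1 &
           vecrep p P = ratdemand p y *m nu]) /\
  (stoch_rationalizable p P <->
     exists nu : 'cV[R]_(ncols p y),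
       (forall h, 0 <= nu h 0) /\ vecrep p P = ratdemand p y *m nu).
Proof.
have necessary := stoch_rationalizable_simplex hK hp hy (P := P).
have sufficient nu nu_ge0 P_nu :=
  @mixture_stoch_rationalizable R K J p hK hp y hy P hP nu nu_ge0 P_nu hJ.
split; split.
- exact: necessary.
- by move=> [nu [nu_ge0 _ P_nu]]; apply: sufficient P_nu.
- by move/necessary => [nu [nu_ge0 _ P_nu]]; exists nu.
- by move=> [nu [nu_ge0 P_nu]]; apply: sufficient P_nu.
Qed.
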